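(* Let $\mathcal G=(V,E,r)$ be a graph. The divisor class group of $\mathbf A(\mathcal G)$ is free abelian of rank $2|E|-|V|+\iota$, where $\iota$ is the number of isolated vertices of $\mathcal G$.
   Context: A graph $\mathcal G=(V,E,r)$ consists of a finite vertex set $V$, a finite edge set $E$ disjoint from $V$, and a map $r$ assigning to each edge a two-element subset of $V$; multiple edges allowed, no loops. An agglomeration on $\mathcal G$ is a function $a\colon V\cup E\to\mathbb N_0$ with $a(v)\ge a(e)$ whenever $v$ is incident with $e$; $\mathbf A(\mathcal G)$ is the monoid of agglomerations under pointwise addition; it is a Krull monoid. For a Krull monoid $H$ with divisor theory $\varphi\colon H\to D=\mathbb N_0^{(I)}$ (a divisor homomorphism, i.e. $\varphi(a)$ a summand of $\varphi(b)$ implies $a$ a summand of $b$, such that each standard basis vector is a pointwise minimum of finitely many elements of $\varphi(H)$), the divisor class group is $\mathbf q(D)/\mathbf q(\varphi(H))$, where $\mathbf q$ denotes the quotient group; it is independent of the choice of divisor theory. *)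

From Stdlib Require List.
From mathcomp Require Import all_boot all_order all_algebra.
Set Implicit Arguments. Unset Strict Implicit. Unset Printing Implicit Defensive.
Import Order.TTheory GRing.Theory Num.Theory.

(* A graph (V, E, r): finite vertex type V, finite edge type E, and
   r e = the two (distinct) endpoints of e.  Multiple edges allowed
   (r need not be injective), no loops. *)
Record graph := Graph {
  gV : finType;
  gE : finType;
  gr : gE -> gV * gV;
  gr_noloop : forall e, (gr e).1 != (gr e).2
}.

Definition incident (G : graph) (v : gV G) (e : gE G) : bool :=
  (v == (gr e).1) || (v == (gr e).2).

Definition isolated (G : graph) (v : gV G) : bool :=
  [forall e : gE G, ~~ incident v e].

Definition n_isolated (G : graph) : nat := #|[set v : gV G | isolated v]|.

Definition carrier (G : graph) := {ffun (gV G + gE G)%type -> nat}.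

Definition agglomeration (G : graph) (a : carrier G) : Prop :=
  forall (v : gV G) (e : gE G), incident v e -> a (inr e) <= a (inl v).

Definition addc (G : graph) (a b : carrier G) : carrier G :=
  [ffun x => a x + b x].

Definition finsupp_nat (I : Type) (f : I -> nat) : Prop :=
  exists s : seq I, forall i, f i <> 0%N -> List.In i s.
Definition finsupp_int (I : Type) (f : I -> int) : Prop :=
  exists s : seq I, forall i, f i <> 0%R -> List.In i s.

Definition divisor_theory (G : graph) (I : Type) (phi : carrier G -> I -> nat)
  : Prop :=
  (forall a, agglomeration a -> finsupp_nat (phi a)) /\
  (forall i, phi [ffun _ => 0%N] i = 0%N) /\
  (forall a b, agglomeration a -> agglomeration b ->
     forall i, phi (addc a b) i = (phi a i + phi b i)%N) /\
  (forall a b, agglomeration a -> agglomeration b ->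
     (forall i, phi a i <= phi b i) ->
     exists c, agglomeration c /\ b = addc a c) /\
  (* each standard basis vector is a pointwise minimum of finitely many
     (and at least one) elements of phi(H) *)
  (forall i : I, exists (a0 : carrier G) (s : seq (carrier G)),
     agglomeration a0 /\ (forall a, List.In a s -> agglomeration a) /\
     let m := fun j => foldr (fun a k => minn (phi a j) k) (phi a0 j) s in
     m i = 1%N /\ forall j, j <> i -> m j = 0%N).

(* The divisor class group q(D)/q(phi(H)) is free abelian of rank n:
   there is a surjective group homomorphism from q(D) (finitely supported
   I -> Z) onto Z^n whose kernel is q(phi(H)) = {phi a - phi b : a, b in H}. *)
Definition class_group_free_of_rank (G : graph) (I : Type)
    (phi : carrier G -> I -> nat) (n : nat) : Prop :=
  exists psi : (I -> int) -> ('I_n -> int),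
    (forall f g, finsupp_int f -> finsupp_int g ->
        psi (fun i => f i + g i)%R = (fun k => psi f k + psi g k)%R) /\
    (forall y : 'I_n -> int, exists f, finsupp_int f /\ psi f = y) /\
    (forall f, finsupp_int f ->
       (psi f = (fun _ => 0%R) <->
        exists a b, agglomeration a /\ agglomeration b /\
          f = (fun i => (phi a i)%:Z - (phi b i)%:Z)%R)).

(* Agglomerations are the lattice points of the cone in Z^(V+E) cut out by the facet
   inequalities a(v) - a(e) >= 0 for every half-edge (an edge e with one of its endpoints v),
   a(e) >= 0 for every edge and a(w) >= 0 for every isolated vertex w.  Reading off these
   2|E| + |E| + iota facet values is a divisor theory, and any divisor theory agrees with it
   up to a bijection of coordinates: for each facet, an element vanishing exactly there forces
   a coordinate of the other theory proportional to that facet, and a coordinate that is no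
   facet cannot exist, since an element vanishing there but at no facet would, suitably
   scaled, dominate an element that is positive there.  The class group is
   thus the cokernel of the injective facet map Z^(V+E) -> Z^facets.  The values at the edges,
   the isolated vertices and one chosen half-edge at each other vertex determine a point of
   Z^(V+E), so the cokernel is free on the 2|E| - (|V| - iota) remaining half-edges. *)

From HB Require Import structures.
From mathcomp Require Import all_boot all_order all_algebra.
From mathcomp Require Import zify.
From Stdlib Require Import Classical ClassicalEpsilon FunctionalExtensionality.
Set Implicit Arguments. Unset Strict Implicit. Unset Printing Implicit Defensive.
Import GRing.Theory Num.Theory.

Lemma In_mem (A : eqType) (x : A) (s : seq A) : x \in s -> List.In x s.
Proof. by elim: s => // y s IH; rewrite inE => /orP[/eqP ->|/IH]; [left|right]. Qed.

Lemma In_enum (T : finType) (t : T) : List.In t (enum T).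
Proof. by apply: In_mem; rewrite mem_enum. Qed.

Lemma finsupp_int_fin (T : finType) (f : T -> int) : finsupp_int f.
Proof. by exists (enum T) => t _; apply: In_enum. Qed.

Lemma finsupp_int_comp (A B : Type) (f : B -> int) (rho : A -> B) (tau : B -> A) :
  cancel rho tau -> finsupp_int f -> finsupp_int (f \o rho).
Proof.
by move=> rhoK [s fs]; exists (map tau s) => t /fs /(List.in_map tau); rewrite rhoK.
Qed.

Lemma leq_sum_In (A : Type) (f : A -> nat) (s : seq A) x :
  List.In x s -> f x <= \sum_(y <- s) f y.
Proof.
elim: s => // y s IH [->|/IH]; rewrite big_cons; first exact: leq_addr.
by move/leq_trans; apply; rewrite leq_addl.
Qed.

Lemma foldr_minn_attained (A : Type) (f : A -> nat) (a0 : A) (s : seq A) :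
  exists2 b, b = a0 \/ List.In b s & foldr (fun a k => minn (f a) k) (f a0) s = f b.
Proof.
elim: s => [|a s [b hb IH]] /=; first by exists a0; [left|].
have [le_a|lt_b] := leqP (f a) (foldr (fun a k => minn (f a) k) (f a0) s).
  by exists a; [right; left|].
by exists b => //; case: hb; [left | right; right].
Qed.

Lemma foldr_minn_le (A : Type) (f : A -> nat) (a0 : A) (s : seq A) b :
  b = a0 \/ List.In b s -> foldr (fun a k => minn (f a) k) (f a0) s <= f b.
Proof.
elim: s => [[->|[]]|a s IH hb] //=; rewrite geq_min.
case: hb => [ba0|[<-|hb]]; first by rewrite IH ?orbT; [|left].
  by rewrite leqnn.
by rewrite IH ?orbT; [|right].
Qed.

Section Graph.
Variable G : graph.
Implicit Types (a b c h z : carrier G) (v : gV G) (e : gE G).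

Definition half_edge := (gE G * bool)%type.
HB.instance Definition _ := Finite.on half_edge.

Definition endpoint (p : half_edge) : gV G := if p.2 then (gr p.1).2 else (gr p.1).1.

Lemma incident_endpoint p : incident (endpoint p) p.1.
Proof. by rewrite /incident /endpoint; case: p.2; rewrite eqxx ?orbT. Qed.

Lemma incidentP v e : reflect (exists s, v = endpoint (e, s)) (incident v e).
Proof.
apply: (iffP orP) => [[] /eqP ->|[[] ->]]; [by exists false | by exists true | by right | by left].
Qed.

Lemma endpoint_inj e s s' : endpoint (e, s) = endpoint (e, s') -> s = s'.
Proof.
rewrite /endpoint => E; have := gr_noloop e.
by case: s s' E => [] [] //= ->; rewrite eqxx.
Qed.

Lemma isolatedN_endpoint p : ~~ isolated (endpoint p).
Proof. by rewrite negb_forall; apply/existsP; exists p.1; rewrite negbK incident_endpoint. Qed.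

Lemma isolated_neq_endpoint (w : {v | isolated v}) p : val w != endpoint p.
Proof. by apply: contraTneq (valP w) => ->; apply: isolatedN_endpoint. Qed.

Definition toZ (a : carrier G) (y : gV G + gE G) : int := Posz (a y).

Definition scalec (k : nat) (a : carrier G) : carrier G := [ffun y => k * a y].

Definition sumc (T : Type) (r : seq T) (F : T -> carrier G) : carrier G :=
  [ffun y => \sum_(t <- r) F t y].

Definition indicator (A : pred (gV G)) (B : pred (gE G)) : carrier G :=
  [ffun y => match y with inl v => nat_of_bool (A v) | inr e => nat_of_bool (B e) end].

Lemma agglomeration0 : agglomeration ([ffun _ => 0] : carrier G).
Proof. by move=> v e _; rewrite !ffunE. Qed.

Lemma agglomeration_addc a b :
  agglomeration a -> agglomeration b -> agglomeration (addc a b).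
Proof. by move=> ha hb v e ve; rewrite !ffunE leq_add ?ha ?hb. Qed.

Lemma agglomeration_scalec k a : agglomeration a -> agglomeration (scalec k a).
Proof. by move=> ha v e ve; rewrite !ffunE leq_mul ?ha. Qed.

Lemma agglomeration_sumc T (r : seq T) F :
  (forall t, agglomeration (F t)) -> agglomeration (sumc r F).
Proof. by move=> hF v e ve; rewrite !ffunE; apply: leq_sum => t _; apply: hF. Qed.

Lemma agglomeration_indicator (A : pred (gV G)) (B : pred (gE G)) :
  (forall v e, incident v e -> B e -> A v) -> agglomeration (indicator A B).
Proof. by move=> hAB v e ve; rewrite !ffunE; case Be: (B e); rewrite ?(hAB v e ve Be). Qed.

Section DivisorTheory.
Variables (I : Type) (phi : carrier G -> I -> nat).
Hypothesis dphi : divisor_theory phi.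

Lemma dtheory_add a b i :
  agglomeration a -> agglomeration b -> phi (addc a b) i = phi a i + phi b i.
Proof. by have [_ [_ [phiD _]]] := dphi; move=> ha hb; apply: phiD. Qed.

Lemma dtheory_sum T (r : seq T) F i :
  (forall t, agglomeration (F t)) -> phi (sumc r F) i = \sum_(t <- r) phi (F t) i.
Proof.
move=> hF; elim: r => [|t r IH].
  have -> : sumc [::] F = [ffun _ => 0] by apply/ffunP => y; rewrite !ffunE big_nil.
  by have [_ [-> _]] := dphi; rewrite big_nil.
have -> : sumc (t :: r) F = addc (F t) (sumc r F).
  by apply/ffunP => y; rewrite !ffunE big_cons.
by rewrite dtheory_add ?IH ?big_cons //; apply: agglomeration_sumc.
Qed.

Lemma dtheory_scale k a i : agglomeration a -> phi (scalec k a) i = k * phi a i.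
Proof.
move=> ha; have -> : scalec k a = sumc (index_iota 0 k) (fun _ => a).
  by apply/ffunP => y; rewrite !ffunE sum_nat_const_nat subn0.
by rewrite dtheory_sum // sum_nat_const_nat subn0.
Qed.

Lemma dtheory_separates i j :
  j <> i -> exists a, agglomeration a /\ 0 < phi a i /\ phi a j = 0.
Proof.
move=> ji; have [_ [_ [_ [_ /(_ i) [a0 [s [ha0 [hs [mi mj]]]]]]]]] := dphi.
have [b hb bj] := foldr_minn_attained (fun a => phi a j) a0 s.
exists b; split; first by case: hb => [->|/hs].
split; last by rewrite -bj mj.
by apply: leq_trans (foldr_minn_le (fun a => phi a i) hb); rewrite mi.
Qed.

Lemma dtheory_hits_one i : exists a, agglomeration a /\ phi a i = 1.
Proof.
have [_ [_ [_ [_ /(_ i) [a0 [s [ha0 [hs [mi _]]]]]]]]] := dphi.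
have [b hb bi] := foldr_minn_attained (fun a => phi a i) a0 s.
by exists b; split; [case: hb => [->|/hs] | rewrite -bi mi].
Qed.

Lemma dtheory_inj i j : (forall a, agglomeration a -> phi a i = phi a j) -> i = j.
Proof.
move=> eq_ij; apply: NNPP => /dtheory_separates[a [ha [aj ai]]].
by move: aj; rewrite -eq_ij // ai.
Qed.

End DivisorTheory.

Lemma dtheory_le_transfer I J (phi : carrier G -> I -> nat) (psi : carrier G -> J -> nat) a b :
  divisor_theory phi -> divisor_theory psi -> agglomeration a -> agglomeration b ->
  (forall i, phi a i <= phi b i) -> forall j, psi a j <= psi b j.
Proof.
move=> [_ [_ [_ [dvd _]]]] dpsi ha hb /(dvd _ _ ha hb)[c [hc ->]] j.
by rewrite (dtheory_add dpsi) // leq_addr.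
Qed.

Section Uniqueness.
Variables (T : finType) (psi : carrier G -> T -> nat).
Variables (I : Type) (phi : carrier G -> I -> nat).
Hypotheses (dpsi : divisor_theory psi) (dphi : divisor_theory phi).

Lemma exists_common_witness J (chi : carrier G -> J -> nat) j (P : pred T) :
  divisor_theory chi ->
  (forall t, P t -> exists a, agglomeration a /\ chi a j = 0 /\ 0 < psi a t) ->
  exists h, agglomeration h /\ chi h j = 0 /\ forall t, P t -> 0 < psi h t.
Proof.
move=> dchi wit.
have /fin_all_exists[F hF] t :
    exists a, agglomeration a /\ chi a j = 0 /\ (P t -> 0 < psi a t).
  have [/wit[a [ha [aj a_pos]]]|_] := boolP (P t); first by exists a.
  exists [ffun _ => 0]; split; first exact: agglomeration0.
  by have [_ [-> _]] := dchi.
have aggF t : agglomeration (F t) by case: (hF t).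
exists (sumc (enum T) F); split; first exact: agglomeration_sumc.
split; first by rewrite (dtheory_sum dchi) // big1_seq // => t _; case: (hF t) => _ [].
move=> t Pt; rewrite (dtheory_sum dpsi) // (big_rem t) ?mem_enum //=.
by case: (hF t) => _ [_ /(_ Pt) /leq_trans]; apply; rewrite leq_addr.
Qed.

Lemma exists_vanishing_only_at t :
  exists h, agglomeration h /\ psi h t = 0 /\ forall t', t' != t -> 0 < psi h t'.
Proof.
apply: (exists_common_witness dpsi) => t' t't.
have tt' : t <> t' by apply/eqP; rewrite eq_sym.
have [a [ha [a_pos at0]]] := dtheory_separates dpsi tt'.
by exists a.
Qed.

Lemma exists_phi_vanishing t h :
  agglomeration h -> psi h t = 0 -> exists j, phi h j = 0.
Proof.
(* Otherwise a multiple of [h] dominates [z] in [phi], hence in [psi], which fails at [t]. *)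
move=> hh ht; apply: NNPP => no_zero.
have h_pos j : 0 < phi h j by rewrite lt0n; apply/eqP => hj; apply: no_zero; exists j.
have [z [hz zt]] := dtheory_hits_one dpsi t.
have [fin _] := dphi; have [s zs] := fin z hz.
pose K := \sum_(j <- s) phi z j.
have : psi z t <= psi (scalec K h) t.
  apply: (dtheory_le_transfer dphi dpsi hz (agglomeration_scalec K hh)) => j.
  rewrite (dtheory_scale dphi) //; have [-> // | /eqP/zs zj] := eqVneq (phi z j) 0.
  exact: leq_trans (leq_sum_In _ zj) (leq_pmulr K (h_pos j)).
by rewrite (dtheory_scale dpsi) // ht muln0 zt.
Qed.

Lemma phi_proportional_to_psi t h z j :
  agglomeration h -> psi h t = 0 -> (forall t', t' != t -> 0 < psi h t') ->
  agglomeration z -> psi z t = 1 -> phi h j = 0 ->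
  forall a, agglomeration a -> phi a j = psi a t * phi z j.
Proof.
move=> hh ht h_pos hz zt hj a ha; set k := psi a t.
(* As [h] vanishes only at [t], adding [M h] dominates every [psi]-coordinate but [t]. *)
pose M := \sum_t' (k * psi z t' + psi a t').
have leM t' : k * psi z t' + psi a t' <= M by rewrite /M (bigD1 t') //= leq_addr.
have dominated (X Y : T -> nat) : (forall t', X t' <= M) -> X t <= Y t ->
    forall t', X t' <= Y t' + M * psi h t'.
  move=> XM XYt t'; have [-> | t't] := eqVneq t' t; first by rewrite ht muln0 addn0.
  by rewrite (leq_trans (XM t')) // (leq_trans (leq_pmulr M (h_pos t' t't))) ?leq_addl.
have [hk hM] := (agglomeration_scalec k hz, agglomeration_scalec M hh).
have le1 : phi (scalec k z) j <= phi (addc a (scalec M h)) j.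
  apply: (dtheory_le_transfer dpsi dphi hk (agglomeration_addc ha hM)) => t'.
  rewrite (dtheory_add dpsi) // !(dtheory_scale dpsi) //.
  apply: (dominated (fun t' => k * psi z t') (psi a)) => [t''|]; last by rewrite zt muln1.
  by apply: leq_trans (leM t''); rewrite leq_addr.
have le2 : phi a j <= phi (addc (scalec k z) (scalec M h)) j.
  apply: (dtheory_le_transfer dpsi dphi ha (agglomeration_addc hk hM)) => t'.
  rewrite (dtheory_add dpsi) // !(dtheory_scale dpsi) //.
  apply: (dominated (psi a) (fun t' => k * psi z t')) => [t''|]; last by rewrite zt muln1.
  by apply: leq_trans (leM t''); rewrite leq_addl.
move: le1 le2; rewrite !(dtheory_add dphi) // !(dtheory_scale dphi) // hj !muln0 !addn0.
by move=> le1 le2; apply/eqP; rewrite eqn_leq le1 le2.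
Qed.

Lemma exists_phi_coordinate t : exists j, forall a, agglomeration a -> phi a j = psi a t.
Proof.
have [h [hh [ht h_pos]]] := exists_vanishing_only_at t.
have [z [hz zt]] := dtheory_hits_one dpsi t.
have [j hj] := exists_phi_vanishing hh ht.
have scale := phi_proportional_to_psi hh ht h_pos hz zt hj.
have [a1 [ha1 a1j]] := dtheory_hits_one dphi j.
have zj : phi z j = 1.
  by move: a1j; rewrite scale // => /eqP; rewrite muln_eq1 => /andP[_ /eqP].
by exists j => a ha; rewrite scale // zj muln1.
Qed.

Lemma exists_psi_coordinate i : exists t, forall a, agglomeration a -> phi a i = psi a t.
Proof.
apply: NNPP => no_coordinate.
have [s [hs [si s_pos]]] :
    exists s, agglomeration s /\ phi s i = 0 /\ forall t, predT t -> 0 < psi s t.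
  apply: (exists_common_witness dphi) => t _.
  have [j hj] := exists_phi_coordinate t.
  have ij : i <> j by move=> ij; apply: no_coordinate; exists t => a ha; rewrite ij hj.
  have [a [ha [aj ai]]] := dtheory_separates dphi ij.
  by exists a; rewrite -hj.
have [a0 [ha0 a0i]] := dtheory_hits_one dphi i.
pose M := \sum_t psi a0 t.
have : phi a0 i <= phi (scalec M s) i.
  apply: (dtheory_le_transfer dpsi dphi ha0 (agglomeration_scalec M hs)) => t.
  rewrite (dtheory_scale dpsi) //; apply: leq_trans (leq_pmulr M (s_pos t isT)).
  by rewrite /M (bigD1 t) //= leq_addr.
by rewrite (dtheory_scale dphi) // si muln0 a0i.
Qed.

Lemma dtheory_unique : exists (rho : T -> I) (tau : I -> T),
  [/\ cancel rho tau, cancel tau rho &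
      forall a t, agglomeration a -> phi a (rho t) = psi a t].
Proof.
have [rho hrho] := fin_all_exists exists_phi_coordinate.
have [tau htau] := ClassicalEpsilon.choice _ exists_psi_coordinate.
exists rho, tau; split => [t|i|a t]; last exact: hrho.
  by apply: (dtheory_inj dpsi) => a ha; rewrite -htau // hrho.
by apply: (dtheory_inj dphi) => a ha; rewrite hrho // -htau.
Qed.

End Uniqueness.

Lemma class_group_reindex T I (psi : carrier G -> T -> nat) (phi : carrier G -> I -> nat)
    (rho : T -> I) (tau : I -> T) n :
  cancel rho tau -> cancel tau rho ->
  (forall a t, agglomeration a -> phi a (rho t) = psi a t) ->
  class_group_free_of_rank psi n -> class_group_free_of_rank phi n.
Proof.
move=> rhoK tauK phi_rho [q [qD [q_surj q_ker]]].
exists (fun f => q (f \o rho)); split; [|split].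
- by move=> f g fs gs; apply: qD; apply: finsupp_int_comp rhoK _.
- move=> y; have [g [gs <-]] := q_surj y.
  exists (g \o tau); split; first exact: finsupp_int_comp tauK gs.
  by congr q; apply: functional_extensionality => t /=; rewrite rhoK.
- move=> f fs; rewrite q_ker; last exact: finsupp_int_comp rhoK fs.
  split=> -[a [b [ha [hb fab]]]]; exists a, b; do 2!split => //.
    apply: functional_extensionality => x; rewrite -(tauK x).
    by have /= -> := congr1 (@^~ (tau x)) fab; rewrite !phi_rho.
  by apply: functional_extensionality => t; rewrite /= fab !phi_rho.
Qed.

Definition facet := (half_edge + gE G + {v : gV G | isolated v})%type.
HB.instance Definition _ := Finite.on facet.

Definition facet_form (t : facet) (x : gV G + gE G -> int) : int :=
  match t with
  | inl (inl p) => (x (inl (endpoint p)) - x (inr p.1))%R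
  | inl (inr e) => x (inr e)
  | inr w => x (inl (val w))
  end.

Definition facet_val a (t : facet) : nat :=
  match t with
  | inl (inl p) => a (inl (endpoint p)) - a (inr p.1)
  | inl (inr e) => a (inr e)
  | inr w => a (inl (val w))
  end.

Lemma facet_formD t (x y : gV G + gE G -> int) :
  facet_form t (fun u => x u + y u)%R = (facet_form t x + facet_form t y)%R.
Proof. by case: t => [[p|e]|w] /=; lia. Qed.

Lemma facet_formB t (x y : gV G + gE G -> int) :
  facet_form t (fun u => x u - y u)%R = (facet_form t x - facet_form t y)%R.
Proof. by case: t => [[p|e]|w] /=; lia. Qed.

Lemma facet_val_Z a t : agglomeration a -> ((facet_val a t)%:Z = facet_form t (toZ a))%R.
Proof. by case: t => [[p|e]|w] //= ha; rewrite subzn // ha // incident_endpoint. Qed.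

Lemma facet_val_add a b t :
  agglomeration a -> agglomeration b -> facet_val (addc a b) t = facet_val a t + facet_val b t.
Proof.
case: t => [[p|e]|w] ha hb //=; rewrite !ffunE //.
by have := ha _ _ (incident_endpoint p); have := hb _ _ (incident_endpoint p); lia.
Qed.

Lemma facet_form_ge0_agglomeration (x : gV G + gE G -> int) :
  (forall t, 0 <= facet_form t x)%R -> exists c, agglomeration c /\ toZ c = x.
Proof.
move=> x_facets.
have x_ge0 u : (0 <= x u)%R.
  case: u => [v|e]; last exact: (x_facets (inl (inr e))).
  have [iv|/forallPn[e /negPn /incidentP[s ->]]] := boolP (isolated v).
    exact: (x_facets (inr (exist _ v iv))).
  by have := x_facets (inl (inl (e, s))); have := x_facets (inl (inr e)) => /=; lia.
exists [ffun u => `|x u|%N]; split => [v e /incidentP[s ->]|].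
  rewrite !ffunE; have := x_facets (inl (inl (e, s))); have := x_ge0 (inr e) => /=; lia.
by apply: functional_extensionality => u; rewrite /toZ ffunE gez0_abs.
Qed.

Lemma facet_val_dvd a b :
  agglomeration a -> agglomeration b -> (forall t, facet_val a t <= facet_val b t) ->
  exists c, agglomeration c /\ b = addc a c.
Proof.
move=> ha hb ab.
have [c [hc ec]] : exists c, agglomeration c /\ toZ c = (fun u => toZ b u - toZ a u)%R.
  apply: facet_form_ge0_agglomeration => t.
  by rewrite facet_formB -!facet_val_Z // subr_ge0 lez_nat.
exists c; split => //; apply/ffunP => u; rewrite ffunE.
by have /= := congr1 (@^~ u) ec; rewrite /toZ; lia.
Qed.

Lemma facet_val_indicator_min (t : facet) : exists a b,
  [/\ agglomeration a, agglomeration b &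
      forall t', minn (facet_val a t') (facet_val b t') = (t' == t)].
Proof.
case: t => [[[e s]|e]|w].
- exists (indicator (pred1 (endpoint (e, s))) pred0), (indicator predT (predC1 e)).
  split; [exact: agglomeration_indicator | exact: agglomeration_indicator |].
  case=> [[[e' s']|e']|w'] /=; rewrite !ffunE /= ?min0n //.
    rewrite !(inj_eq inl_inj) xpair_eqE subn0.
    have [-> | _] := eqVneq e' e; last by rewrite minn0.
    have [-> | s's] := eqVneq s' s; first by rewrite eqxx.
    suff /negbTE -> : endpoint (e, s') != endpoint (e, s) by [].
    by apply/eqP => /endpoint_inj; apply/eqP.
  by rewrite (negbTE (isolated_neq_endpoint _ _)).
- exists (indicator (fun v => incident v e) (pred1 e)), (indicator predT predT).
  split; [|exact: agglomeration_indicator|].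
    by apply: agglomeration_indicator => v e' ve' /eqP <-.
  case=> [[[e' s']|e']|w'] /=; rewrite !ffunE /= ?subnn ?minn0 //.
    by rewrite (inj_eq inl_inj) (inj_eq inr_inj); case: (e' == e).
  by move: (valP w') => /forallP /(_ e) /negbTE ->.
- exists (indicator (pred1 (val w)) pred0), (indicator (pred1 (val w)) pred0).
  split; [exact: agglomeration_indicator | exact: agglomeration_indicator |].
  case=> [[p|e]|w'] /=; rewrite minnn !ffunE //=.
  by rewrite subn0 eq_sym (negbTE (isolated_neq_endpoint _ _)).
Qed.

Lemma facet_val_dtheory : divisor_theory facet_val.
Proof.
split; [|split; [|split; [|split]]].
- by move=> a _; exists (enum {: facet}) => t _; apply: In_enum.
- by case=> [[p|e]|w]; rewrite /= !ffunE.
- by move=> a b ha hb t; apply: facet_val_add.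
- exact: facet_val_dvd.
- move=> t; have [a [b [ha hb ab]]] := facet_val_indicator_min t.
  exists b, [:: a]; split => //; split; first by move=> c [<-|].
  by rewrite /= ab eqxx; split => // t' t't; rewrite ab; case: eqP.
Qed.

Definition chosen_end v : option half_edge :=
  omap (fun e => (e, v != (gr e).1)) [pick e | incident v e].

Lemma chosen_endP v p : chosen_end v = Some p -> endpoint p = v.
Proof.
rewrite /chosen_end; case: pickP => //= e /orP ve [<-]; rewrite /endpoint /=.
have [// | ne] := eqVneq v (gr e).1.
by case: ve => /eqP E; [rewrite E eqxx in ne | rewrite E].
Qed.

Lemma chosen_end_None (v : gV G) : (chosen_end v == None) = isolated v.
Proof.
rewrite /chosen_end /isolated; case: pickP => [e ve|no_e] /=.
  by apply/esym/forallP => /(_ e); rewrite ve.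
by apply/esym/forallP => e; rewrite no_e.
Qed.

Definition chosen : {set half_edge} := [set p | chosen_end (endpoint p) == Some p].

Definition free_half_edges : {set half_edge} := ~: chosen.

Lemma card_chosen : #|chosen| = #|[set v : gV G | ~~ isolated v]|.
Proof.
have endpoint_inj_chosen : {in chosen &, injective endpoint}.
  by move=> p q; rewrite !inE => /eqP hp /eqP hq epq; move: hp; rewrite epq hq => -[].
rewrite -(card_in_imset endpoint_inj_chosen); apply: eq_card => v.
rewrite inE; apply/imsetP/idP => [[p _ ->]|]; first exact: isolatedN_endpoint.
rewrite -chosen_end_None; case E: (chosen_end v) => [p|] // _.
by exists p; rewrite ?inE (chosen_endP E) ?E.
Qed.

Lemma card_free_half_edges :
  (#|free_half_edges|%:Z = 2 * #|gE G|%:Z - #|gV G|%:Z + (n_isolated G)%:Z)%R.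
Proof.
have half_edges : #|chosen| + #|free_half_edges| = 2 * #|gE G|.
  by rewrite cardsC card_prod card_bool mulnC.
have vertices : #|[set v : gV G | isolated v]| + #|[set v : gV G | ~~ isolated v]| = #|gV G|.
  rewrite -(cardsC [set v : gV G | isolated v]); congr (_ + _).
  by apply: eq_card => v; rewrite !inE.
rewrite /n_isolated; rewrite card_chosen in half_edges; lia.
Qed.

(* The point of Z^(V+E) whose facet values agree with [g] off the free half-edges. *)
Definition lift (g : facet -> int) (u : gV G + gE G) : int :=
  match u with
  | inr e => g (inl (inr e))
  | inl v =>
      if insub v is Some w then g (inr w)
      else if chosen_end v is Some p then (g (inl (inl p)) + g (inl (inr p.1)))%R
      else 0
  end.

Arguments lift : simpl never.

Lemma lift_edge g e : lift g (inr e) = g (inl (inr e)).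
Proof. by []. Qed.

Lemma lift_isolated g (w : {v | isolated v}) : lift g (inl (val w)) = g (inr w).
Proof. by rewrite /lift valK. Qed.

Lemma lift_chosen g v p :
  chosen_end v = Some p -> lift g (inl v) = (g (inl (inl p)) + g (inl (inr p.1)))%R.
Proof.
move=> E; have iv : ~~ isolated v by rewrite -chosen_end_None E.
by rewrite /lift insubN // E.
Qed.

Lemma lift_form x : lift (fun t => facet_form t x) = x.
Proof.
apply: functional_extensionality => -[v|e] //.
have [iv|] := boolP (isolated v); first exact: (lift_isolated _ (exist _ v iv)).
rewrite -chosen_end_None; case E: (chosen_end v) => [p|] // _.
by rewrite (lift_chosen _ E) /= (chosen_endP E) subrK.
Qed.

Lemma lift_off_free g p :
  p \notin free_half_edges -> facet_form (inl (inl p)) (lift g) = g (inl (inl p)).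
Proof. by rewrite !inE negbK => /eqP E /=; rewrite (lift_chosen _ E) lift_edge addrK. Qed.

Definition free_part (g : facet -> int) (k : 'I_#|free_half_edges|) : int :=
  (g (inl (inl (enum_val k))) - facet_form (inl (inl (enum_val k))) (lift g))%R.

Lemma free_partD g1 g2 :
  free_part (fun t => g1 t + g2 t)%R = (fun k => free_part g1 k + free_part g2 k)%R.
Proof.
apply: functional_extensionality => k; rewrite /free_part /=.
have := isolatedN_endpoint (enum_val k); rewrite -chosen_end_None.
by case E: (chosen_end _) => [p|] // _; rewrite !(lift_chosen _ E) !lift_edge; lia.
Qed.

Lemma free_part_form x : free_part (fun t => facet_form t x) = (fun _ => 0%R).
Proof. by apply: functional_extensionality => k; rewrite /free_part lift_form subrr. Qed.

Lemma free_part_eq0 g : free_part g = (fun _ => 0%R) -> forall t, g t = facet_form t (lift g).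
Proof.
move=> g_free [[p|e]|w] //; last by rewrite /= lift_isolated.
have [pU|/lift_off_free -> //] := boolP (p \in free_half_edges).
have /= /eqP := congr1 (@^~ (enum_rank_in pU p)) g_free.
by rewrite /free_part enum_rankK_in // subr_eq0 => /eqP.
Qed.

Lemma free_part_surj y : exists g, free_part g = y.
Proof.
pose g (t : facet) :=
  if t is inl (inl p) then (if [pick k | enum_val k == p] is Some k then y k else 0%R)
  else 0%R.
have g_chosen p : p \notin free_half_edges -> g (inl (inl p)) = 0%R.
  by move=> pU; rewrite /g; case: pickP => // k /eqP ek; rewrite -ek enum_valP in pU.
have lift_g0 v : lift g (inl v) = 0%R.
  have [iv|] := boolP (isolated v); first exact: (lift_isolated _ (exist _ v iv)).
  rewrite -chosen_end_None; case E: (chosen_end v) => [p|] // _.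
  by rewrite (lift_chosen _ E) g_chosen // !inE negbK (chosen_endP E) E.
exists g; apply: functional_extensionality => k.
rewrite /free_part /= lift_g0 lift_edge /= !subr0.
by case: pickP => [k' /eqP /enum_val_inj -> | /(_ k)] //; rewrite eqxx.
Qed.

Lemma facet_lattice_diff (g : facet -> int) :
  (exists x, g = fun t => facet_form t x) <->
  exists a b, agglomeration a /\ agglomeration b /\
    g = (fun t => (facet_val a t)%:Z - (facet_val b t)%:Z)%R.
Proof.
split=> [[x ->] | [a [b [ha [hb ->]]]]]; last first.
  exists (fun u => toZ a u - toZ b u)%R; apply: functional_extensionality => t.
  by rewrite facet_formB -!facet_val_Z.
pose M := \sum_t `|facet_form t x|%N.
pose b : carrier G := [ffun u => if u is inl _ then M + M else M].
have hb : agglomeration b by move=> v e _; rewrite !ffunE leq_addl.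
have bM t : M <= facet_val b t by case: t => [[p|e]|w]; rewrite /= !ffunE ?addnK ?leq_addl.
have [a [ha ea]] : exists a, agglomeration a /\ toZ a = (fun u => x u + toZ b u)%R.
  apply: facet_form_ge0_agglomeration => t; rewrite facet_formD -facet_val_Z //.
  have : `|facet_form t x|%N <= M by rewrite /M (bigD1 t) //= leq_addr.
  by have := bM t; lia.
exists a, b; do 2!split => //; apply: functional_extensionality => t.
by rewrite !facet_val_Z // ea facet_formD addrK.
Qed.

Lemma class_group_facet_val : class_group_free_of_rank facet_val #|free_half_edges|.
Proof.
exists free_part; split; [|split].
- by move=> f g _ _; apply: free_partD.
- by move=> y; have [g <-] := free_part_surj y; exists g; split => //; apply: finsupp_int_fin.
- move=> g _; rewrite -facet_lattice_diff.
  split=> [/free_part_eq0 g_lift | [x ->]]; last exact: free_part_form.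
  by exists (lift g); apply: functional_extensionality.
Qed.

End Graph.

Theorem corollary4p7 (G : graph) :
  (exists (I : Type) (phi : carrier G -> I -> nat), divisor_theory phi) /\
  (forall (I : Type) (phi : carrier G -> I -> nat), divisor_theory phi ->
     exists n : nat,
       (n%:Z = 2 * (#|gE G|)%:Z - (#|gV G|)%:Z + (n_isolated G)%:Z)%R /\
       class_group_free_of_rank phi n).
Proof.
split; first by exists (facet G), (@facet_val G); apply: facet_val_dtheory.
move=> I phi dphi.
have [rho [tau [rhoK tauK phi_rho]]] := dtheory_unique (facet_val_dtheory G) dphi.
exists #|free_half_edges G|; split; first exact: card_free_half_edges.
exact: class_group_reindex rhoK tauK phi_rho (class_group_facet_val G).
Qed.
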